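(* Under the standing setup in the context, there are constants $K\ge1$, $C\ge0$ (depending only on $b,c,L,f$) such that \[\rho_\phi([x],[y])\le K\rho(x,y)+C\quad\text{for all }x,y\in X.\]
   Context: A semi-metric on a set $Z$ is a function $d:Z\times Z\to[0,\infty)$ with $d(x,y)=0$ iff $x=y$ and $d(x,y)=d(y,x)$. For $b\ge1$, $c\ge0$, a $(b,c)$-metric is a semi-metric with $d(x,z)\le b(d(x,y)+d(y,z))+c$ for all $x,y,z$. Standing setup. $X$ is a topological space (in the paper an $n$-manifold) carrying a $(b,c)$-metric $\rho$. A collapsing set consists of: a subset $S\subseteq X$; a family $\mathcal F$ of pairwise disjoint nonempty subsets of $S$ (''fibers'') whose union is $S$; and a subset $T\subseteq S$ meeting each fiber in exactly one point. The fibering is bounded: $f:=\sup_{F\in\mathcal F}\sup_{u,v\in F}\rho(u,v)<\infty$. For $a,a'\in T$, the length of a continuous path $\gamma:[0,1]\to T$ is $\ell(\gamma)=\sup\sum_{i=1}^k\rho(\gamma(t_{i-1}),\gamma(t_i))$ over partitions $0=t_0<\dots<t_k=1$, and $\rho_p(a,a')$ is the infimum of $\ell(\gamma)$ over continuous paths in $T$ from $a$ to $a'$. $T$ is a Lipschitz curve: there is $L\ge1$ with $\rho_p(a,a')\le L\,\rho(a,a')$ for all $a,a'\in T$. The collapsing relation is $x\sim y$ iff $x=y$ or $x,y$ lie in a common fiber; $X^*=X/\!\sim$, $\phi(x)=[x]$. For $x\in X$ let $r_x=\inf_{s\in S}\rho(x,s)$; assume this infimum is attained and fix $x_S\in S$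 with $\rho(x,x_S)=r_x$, taking $x_S=x$ when $x\in S$. Let $x'$ denote the unique point of $T$ in the fiber containing $x_S$. The collapsed metric is $\rho_\phi([x],[y])=\rho(x,y)$ if $x,y\notin S$ and $\rho(x,y)\le r_x+r_y$, and $\rho_\phi([x],[y])=\rho_p(x',y')+r_x+r_y$ otherwise. *)

From HB Require Import structures.
From mathcomp Require Import all_boot all_order all_algebra.
From mathcomp Require Import all_classical all_reals all_analysis.
Set Implicit Arguments. Unset Strict Implicit. Unset Printing Implicit Defensive.
Import Order.TTheory GRing.Theory Num.Theory.
Local Open Scope classical_set_scope.
Local Open Scope ring_scope.

Section Defs.
Context {R : realType} {X : topologicalType}.

Definition semimetric (d : X -> X -> R) : Prop :=
  (forall x y, 0 <= d x y) /\ (forall x y, d x y = 0 <-> x = y) /\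
  (forall x y, d x y = d y x).

Definition bc_metric (b c : R) (d : X -> X -> R) : Prop :=
  semimetric d /\ forall x y z, d x z <= b * (d x y + d y z) + c.

Definition is_partition (k : nat) (t : nat -> R) : Prop :=
  t 0%N = 0 /\ t k = 1 /\ forall i, (i < k)%N -> t i < t i.+1.

Definition partition_sum (d : X -> X -> R) (gamma : R -> X) (k : nat) (t : nat -> R) : R :=
  \sum_(0 <= i < k) d (gamma (t i)) (gamma (t i.+1)).

Definition path_length (d : X -> X -> R) (gamma : R -> X) : \bar R :=
  ereal_sup [set e | exists (k : nat) (t : nat -> R),
                      is_partition k t /\ e = (partition_sum d gamma k t)%:E].

Definition path_in (T : set X) (a a' : X) (gamma : R -> X) : Prop :=
  {within `[0, 1], continuous gamma} /\
  (forall s, s \in `[0, 1] -> T (gamma s)) /\ gamma 0 = a /\ gamma 1 = a'.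

Definition rho_p (d : X -> X -> R) (T : set X) (a a' : X) : \bar R :=
  ereal_inf [set path_length d gamma | gamma in path_in T a a'].

Definition collapsing_set (S : set X) (Fs : set (set X)) (T : set X) : Prop :=
  (forall F, Fs F -> F !=set0) /\
  (forall F G, Fs F -> Fs G -> F `&` G !=set0 -> F = G) /\
  (\bigcup_(F in Fs) F = S) /\
  (T `<=` S) /\
  (forall F, Fs F -> exists! t, F t /\ T t).

Definition fiber_dists (d : X -> X -> R) (Fs : set (set X)) : set R :=
  [set r | exists F u v, Fs F /\ F u /\ F v /\ r = d u v].

(* collapsed metric rho_phi([x],[y]), written on representatives;
   r x = d x (xS x) and pr x = x' *)
Definition rho_phi (d : X -> X -> R) (S T : set X) (xS pr : X -> X) (x y : X) : \bar R :=
  let r z := d z (xS z) in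
  if [&& x \notin S, y \notin S & d x y <= r x + r y] then (d x y)%:E
  else (rho_p d T (pr x) (pr y) + (r x + r y)%:E)%E.

End Defs.

From HB Require Import structures.
From mathcomp Require Import all_boot all_order all_algebra.
From mathcomp Require Import all_classical all_reals all_analysis.
From mathcomp Require Import ring lra.
Import Order.TTheory GRing.Theory Num.Theory.
Local Open Scope classical_set_scope.
Local Open Scope ring_scope.

(* In the first branch of the definition of [rho_phi] the bound is trivial; in
   the second one, [r x + r y <= rho x y] (either one of [x], [y] lies in [S]
   and has [r = 0], or the branch condition fails), so only [rho_p x' y'] needs
   care.  By the Lipschitz property it is at most [L rho(x',y')], and two uses
   of the relaxed triangle inequality through [x] and [y] bound [rho(x',y')]
   linearly in [rho x y], because [rho(x, x') <= b (r x + f) + c]. *)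

Section BcMetric.
Context {R : realType} {X : topologicalType} {b c : R} {rho : X -> X -> R}.
Hypothesis rho_bc : bc_metric b c rho.

Lemma bc_metric_ge0 x y : 0 <= rho x y.
Proof. by case: rho_bc => -[]. Qed.

Lemma bc_metric_sym x y : rho x y = rho y x.
Proof. by case: rho_bc => -[_ []]. Qed.

Lemma bc_metric_xx x : rho x x = 0.
Proof. by case: rho_bc => -[_ [/(_ x x) [_ ->]]]. Qed.

Lemma bc_metric_triangle x y z : rho x z <= b * (rho x y + rho y z) + c.
Proof. by case: rho_bc. Qed.

Hypothesis b_ge0 : 0 <= b.

Lemma bc_metric_triangle3 (a x y e : X) :
  rho a e <= b * rho a x + b ^+ 2 * rho x y + b ^+ 2 * rho y e + b * c + c.
Proof.
apply: le_trans (bc_metric_triangle a x e) _.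
have := ler_wpM2l b_ge0 (bc_metric_triangle x y e); lra.
Qed.

Section NearestPoint.
Context {S : set X} {xS : X -> X}.
Hypothesis xS_nearest : forall x, S (xS x) /\ forall s, S s -> rho x (xS x) <= rho x s.
Hypothesis xS_id : forall x, S x -> xS x = x.

Local Notation r x := (rho x (xS x)).

Lemma dist_to_set_mem_sum_le x y : S x -> r x + r y <= rho x y.
Proof.
move=> Sx; rewrite xS_id // bc_metric_xx add0r [rho x y]bc_metric_sym.
exact: (xS_nearest y).2.
Qed.

Lemma rho_phi_le (T : set X) (pr : X -> X) (M : \bar R) x y :
  ((rho x y)%:E <= M)%E ->
  (r x + r y <= rho x y -> (rho_p rho T (pr x) (pr y) + (rho x y)%:E <= M)%E) ->
  (rho_phi rho S T xS pr x y <= M)%E.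
Proof.
move=> near_le far_le; rewrite /rho_phi /=; case: ifP => // branch.
have sum_le : r x + r y <= rho x y.
  have [/set_mem Sx|Sx] := boolP (x \in S).
    exact: dist_to_set_mem_sum_le.
  have [/set_mem Sy|Sy] := boolP (y \in S).
    by rewrite addrC [rho x y]bc_metric_sym; exact: dist_to_set_mem_sum_le.
  move: branch; rewrite Sx Sy /= => /negbT.
  by rewrite -ltNge => /ltW.
apply: le_trans (far_le sum_le).
by apply: leeD; rewrite // lee_fin.
Qed.

Lemma proj_dist_le (pr : X -> X) (F : R) x y :
  (forall z, rho (xS z) (pr z) <= F) -> r x + r y <= rho x y ->
  rho (pr x) (pr y) <= (2 * b ^+ 2 + b ^+ 3) * rho x y
                       + ((b ^+ 2 + b ^+ 3) * F + 2 * b * c + b ^+ 2 * c + c).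
Proof.
move=> fiber_le sum_le.
have proj_le z : r z <= rho x y -> rho z (pr z) <= b * (rho x y + F) + c.
  move=> rz_le; apply: le_trans (bc_metric_triangle z (xS z) (pr z)) _.
  by rewrite lerD2r ler_wpM2l // lerD.
have rx_le : r x <= rho x y by have := bc_metric_ge0 y (xS y); lra.
have ry_le : r y <= rho x y by have := bc_metric_ge0 x (xS x); lra.
have := ler_wpM2l b_ge0 (proj_le x rx_le); rewrite [rho x _]bc_metric_sym => px_le.
have := ler_wpM2l (exprn_ge0 2 b_ge0) (proj_le y ry_le) => py_le.
have := bc_metric_triangle3 (pr x) x y (pr y).
lra.
Qed.

End NearestPoint.
End BcMetric.

Lemma fiber_dist_le_sup (R : realType) (X : topologicalType) (rho : X -> X -> R)
    (Fs : set (set X)) (G : set X) u v :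
  has_ubound (fiber_dists rho Fs) -> Fs G -> G u -> G v ->
  rho u v <= sup (fiber_dists rho Fs).
Proof. by move=> ub FsG Gu Gv; apply: ub_le_sup => //; exists G, u, v. Qed.

Theorem lemma2p5 (R : realType) (b c L f : R) :
  1 <= b -> 0 <= c -> 1 <= L ->
  exists K C : R, 1 <= K /\ 0 <= C /\
  forall (X : topologicalType) (rho : X -> X -> R)
         (S : set X) (Fs : set (set X)) (T : set X) (xS pr : X -> X),
    bc_metric b c rho ->
    collapsing_set S Fs T ->
    has_ubound (fiber_dists rho Fs) ->
    f = sup (fiber_dists rho Fs) ->
    (forall a a', T a -> T a' -> (rho_p rho T a a' <= (L * rho a a')%:E)%E) ->
    (forall x, S (xS x) /\ forall s, S s -> rho x (xS x) <= rho x s) ->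
    (forall x, S x -> xS x = x) ->
    (forall x, T (pr x) /\ exists F, Fs F /\ F (xS x) /\ F (pr x)) ->
    forall x y : X,
      (rho_phi rho S T xS pr x y <= (K * rho x y + C)%:E)%E.
Proof.
move=> b_ge1 c_ge0 L_ge1.
set A := 2 * b ^+ 2 + b ^+ 3.
set B := (b ^+ 2 + b ^+ 3) * `|f| + 2 * b * c + b ^+ 2 * c + c.
have b_ge0 : 0 <= b by lra.
have [b2_ge0 b3_ge0] := (exprn_ge0 2 b_ge0, exprn_ge0 3 b_ge0).
have A_ge0 : 0 <= A by rewrite /A; lra.
have B_ge0 : 0 <= B by rewrite /B; have := normr_ge0 f; nra.
exists (L * A + 1), (L * B); split; [|split].
- by rewrite lerDr mulr_ge0 //; lra.
- by rewrite mulr_ge0 //; lra.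
move=> X rho S Fs T xS pr rho_bc _ fibers_ub fE Lip xS_nearest xS_id prP x y.
have fiber_le z : rho (xS z) (pr z) <= `|f|.
  have [_ [G [FsG [Gx Gp]]]] := prP z.
  by apply: le_trans (ler_norm f); rewrite fE; exact: fiber_dist_le_sup Gx Gp.
have d_ge0 := bc_metric_ge0 rho_bc x y.
have LAd_ge0 : 0 <= L * A * rho x y by rewrite !mulr_ge0 //; lra.
apply: (rho_phi_le rho_bc xS_nearest xS_id) => [|sum_le]; first by rewrite lee_fin; nra.
apply: le_trans (leeD (Lip _ _ (prP x).1 (prP y).1) (lexx _)) _.
rewrite -EFinD lee_fin.
have L_ge0 : 0 <= L by lra.
have := ler_wpM2l L_ge0 (proj_dist_le rho_bc b_ge0 pr `|f| x y fiber_le sum_le).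
rewrite /A /B; lra.
Qed.
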